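(* Let $m$ be a positive integer, $c$ a nonnegative integer, and $f(x)=x(e^{mx}+c)$ for $x>0$. For each positive integer $n$ and each $i\in\{0,1,2\}$, let $t_i=t_i(n)$ be the unique positive number with $f(t_i)=n+i$. Then, as $n\to\infty$, \begin{align*} t_1-t_0&=\frac{1}{mn}-\frac{1}{m^2nt_0}+O\Bigl(\frac{1}{n\log^2 n}\Bigr),\\ t_2-t_1&=\frac{1}{mn}-\frac{1}{m^2nt_0}+O\Bigl(\frac{1}{n\log^2 n}\Bigr),\\ 2t_1-t_0-t_2&=\frac{1}{mn^2}+O\Bigl(\frac{1}{n^2\log n}\Bigr),\\ \frac1{t_0}+\frac1{t_2}-\frac{2}{t_1}&=O\Bigl(\frac{1}{n^2\log^2 n}\Bigr). \end{align*} *)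

From Stdlib Require Import Reals.
Open Scope R_scope.

Definition fmc (m c : nat) (x : R) : R := x * (exp (INR m * x) + INR c).

Definition bigO (u v : nat -> R) : Prop :=
  exists C : R, exists N : nat, forall n : nat, (N <= n)%nat ->
    Rabs (u n) <= C * Rabs (v n).

From Stdlib Require Import Reals Lra Lia Psatz ZArith.
From Coquelicot Require Import Coquelicot.
Open Scope R_scope.

(* Write phi(x) = x (e^(a x) + C), with a = m and C = c, and d = t1 - t0, e = t2 - t1.
   Convexity of phi gives d phi'(t0) <= 1 <= d phi'(t1), and on the level
   phi(t0) = n one has exactly phi'(t0) = a n + n / t0 - a C t0; this yields
   d = 1/(a n) - 1/(a^2 n t0) + O(1/(n t0^2)).  A second-order Taylor expansion of
   phi at t1 gives (e - d) phi'(t1) = - phi''(t1) (d^2 + e^2) / 2 + O(n d^3) with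
   phi''(t1) ~ a^2 n, whence a n^2 (d - e) = 1 + O(1/t0).  The remaining estimates
   are algebraic consequences, and ln n <= 2 a t0 + ln (1 + C) turns every power
   of 1/t0 into the same power of 4 a / ln n. *)

Lemma MVT_from_0 (g g' : R -> R) (x : R) :
  (forall z, is_derive g z (g' z)) ->
  exists c, Rmin 0 x <= c <= Rmax 0 x /\ g x - g 0 = g' c * x.
Proof.
  intros Hd.
  destruct (MVT_gen g 0 x g') as [c [Hc He]].
  - intros z _; apply Hd.
  - intros z _; apply continuity_pt_filterlim, (ex_derive_continuous g).
    eexists; apply Hd.
  - exists c; split; [exact Hc | lra].
Qed.

Lemma exp_taylor2_bounds (x : R) :
  (0 <= x -> 1 + x + x^2/2 <= exp x) /\ (x <= 0 -> exp x <= 1 + x + x^2/2).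
Proof.
  set (g z := exp z - 1 - z - z^2/2).
  assert (Hd : forall z, is_derive g z (exp z - 1 - z))
    by (intro z; unfold g; auto_derive; auto; field).
  destruct (MVT_from_0 g _ x Hd) as [c [_ Hgx]].
  pose proof (exp_ineq1_le c).
  unfold g in Hgx; rewrite exp_0 in Hgx.
  split; intro Hx; nra.
Qed.

Lemma exp_ge_taylor3 (x : R) : 1 + x + x^2/2 + x^3/6 <= exp x.
Proof.
  set (g z := exp z - 1 - z - z^2/2 - z^3/6).
  assert (Hd : forall z, is_derive g z (exp z - 1 - z - z^2/2))
    by (intro z; unfold g; auto_derive; auto; simpl; field).
  destruct (MVT_from_0 g _ x Hd) as [c [Hc Hgx]].
  destruct (exp_taylor2_bounds c) as [Hpos Hneg].
  unfold g in Hgx; rewrite exp_0 in Hgx.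
  destruct (Rle_dec 0 x) as [Hx | Hx].
  - rewrite Rmin_left, Rmax_right in Hc by lra.
    specialize (Hpos (proj1 Hc)); nra.
  - rewrite Rmin_right, Rmax_left in Hc by lra.
    specialize (Hneg (proj2 Hc)); nra.
Qed.

(* From [exp x * exp (-x) = 1] and the lower bound at [-x]. *)
Lemma exp_le_taylor3 (x : R) : 0 <= x <= 1 -> exp x <= 1 + x + x^2/2 + x^3.
Proof.
  intro Hx.
  pose proof (exp_ge_taylor3 (-x)) as Hlow.
  assert (Hinv : exp x * exp (-x) = 1)
    by (rewrite <- exp_plus; replace (x + -x) with 0 by ring; apply exp_0).
  pose proof (exp_pos x).
  assert (Hprod : 1 <= (1 + x + x^2/2 + x^3) * (1 - x + x^2/2 - x^3/6)).
  { replace ((1 + x + x^2/2 + x^3) * (1 - x + x^2/2 - x^3/6))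
      with (1 + x^3 * ((1-x)*(8 - 3*x + 2*x^2) + 2)/12) by field.
    assert (0 <= x^3) by (apply pow_le; lra).
    assert (0 <= (1-x)*(8 - 3*x + 2*x^2)) by (apply Rmult_le_pos; nra).
    nra. }
  assert (0 < 1 - x + x^2/2 - x^3/6) by nra.
  nra.
Qed.

Lemma sandwich_abs_le (A s d P P' p B : R) :
  0 < p -> p <= P -> p <= P' -> 0 <= A ->
  d * P <= 1 -> 1 <= d * P' ->
  A - P + s * P <= B * p -> - (B * p) <= A - P' + s * P' ->
  Rabs (A * d - 1 + s) <= B.
Proof.
  intros Hp HP HP' HA Hup Hlow Bup Blow.
  set (Z := A * d - 1 + s).
  assert (Zup : Z * P <= A - P + s * P) by (unfold Z; nra).
  assert (Zlow : A - P' + s * P' <= Z * P') by (unfold Z; nra).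
  apply Rabs_le; destruct (Rle_or_lt Z 0) as [HZ | HZ].
  - assert (Z * P' <= Z * p) by nra. nra.
  - assert (Z * p <= Z * P) by nra. nra.
Qed.

Lemma Rabs_le_of_mul_lower (W P p B : R) :
  0 < p -> p <= P -> Rabs (W * P) <= B * p -> Rabs W <= B.
Proof.
  intros Hp HP H; rewrite Rabs_mult, (Rabs_right P) in H by lra.
  pose proof (Rabs_pos W).
  apply (Rmult_le_reg_r p); [lra | nra].
Qed.

Lemma Rabs_div_le (X B a m : R) :
  Rabs X <= B -> 1 <= a -> 0 < m -> Rabs (X / (a * m)) <= B / m.
Proof.
  intros H Ha Hm.
  unfold Rdiv; rewrite Rabs_mult, Rabs_inv, (Rabs_right (a * m)) by nra.
  rewrite Rinv_mult.
  pose proof (Rabs_pos X).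
  assert (0 < / m) by (apply Rinv_0_lt_compat; lra).
  assert (0 < / a <= 1)
    by (split; [apply Rinv_0_lt_compat | rewrite <- Rinv_1; apply Rinv_le_contravar]; lra).
  assert (Rabs X * / a <= B) by nra.
  nra.
Qed.

Lemma Rabs_sum5_le (x1 x2 x3 x4 x5 b1 b2 b3 b4 b5 : R) :
  Rabs x1 <= b1 -> Rabs x2 <= b2 -> Rabs x3 <= b3 -> Rabs x4 <= b4 -> Rabs x5 <= b5 ->
  Rabs (x1 + x2 + x3 + x4 + x5) <= b1 + b2 + b3 + b4 + b5.
Proof.
  intros; repeat (eapply Rle_trans; [apply Rabs_triang | apply Rplus_le_compat]); auto.
Qed.

Lemma sq_sub1_abs_le (D eps : R) :
  Rabs (D - 1) <= eps -> 0 < D -> D <= 4/3 -> Rabs (D^2 - 1) <= 3 * eps.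
Proof.
  intros H HD HD'.
  replace (D^2 - 1) with ((D - 1) * (D + 1)) by ring.
  rewrite Rabs_mult, (Rabs_right (D + 1)) by lra.
  pose proof (Rabs_pos (D - 1)); nra.
Qed.

Lemma mean_sq_near1 (D D' eps : R) :
  Rabs (D - 1) <= eps -> 0 < D <= 4 / 3 -> Rabs (D' - 1) <= eps -> 0 < D' <= 4 / 3 ->
  0 <= (D^2 + D'^2) / 2 <= 2 /\ Rabs ((D^2 + D'^2) / 2 - 1) <= 3 * eps.
Proof.
  intros H HD H' HD'.
  pose proof (sq_sub1_abs_le D eps H (proj1 HD) (proj2 HD)).
  pose proof (sq_sub1_abs_le D' eps H' (proj1 HD') (proj2 HD')).
  split; [simpl; nra |].
  replace ((D^2 + D'^2) / 2 - 1) with ((D^2 - 1) / 2 + (D'^2 - 1) / 2) by field.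
  eapply Rle_trans; [apply Rabs_triang |].
  unfold Rdiv; rewrite !Rabs_mult, (Rabs_right (/ 2)) by lra.
  lra.
Qed.

Lemma pow4_le_scale (n t0 t : R) :
  1 <= t0 -> t0 <= t -> t^4 <= 18 * n -> t <= 18 * n * / t0 /\ 1 <= t * / t0.
Proof.
  intros H1 Ht Hq.
  assert (Hinv : t0 * / t0 = 1) by (field; lra).
  assert (0 < / t0) by (apply Rinv_0_lt_compat; lra).
  assert (t^2 <= t^4) by (apply Rle_pow; lia || lra).
  assert (t * t0 <= t^2) by (simpl; nra).
  split; nra.
Qed.

(* [4608 = 18 * 4^4]. *)
Lemma mul_le_quarter (C t n : R) :
  0 <= C -> 0 < t -> 1 <= n -> 4608 * C^4 < n -> t^4 <= 18 * n -> C * t <= n / 4.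
Proof.
  intros HC Ht Hn Hbig Ht4.
  destruct (Rle_or_lt (C * t) (n / 4)) as [H | H]; [exact H | exfalso].
  assert ((n / 4)^4 <= (C * t)^4) by (apply pow_incr; lra).
  assert (C^4 * t^4 <= C^4 * (18 * n)) by (apply Rmult_le_compat_l; [apply pow_le |]; lra).
  assert (n <= n^3) by (replace n with (n^1) at 1 by ring; apply Rle_pow; lia || lra).
  assert ((n / 4)^4 = n * n^3 / 256) by field.
  assert (n * n^3 >= n * n) by nra.
  replace ((C * t)^4) with (C^4 * t^4) in * by ring.
  nra.
Qed.

Lemma INR_eventually_gt (X : R) : exists N : nat, forall n : nat, (N <= n)%nat -> X < INR n.
Proof.
  destruct (archimed (Rabs X)) as [Hup _].
  assert (Hz : (0 <= up (Rabs X))%Z) by (apply le_IZR; pose proof (Rabs_pos X); lra).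
  exists (Z.to_nat (up (Rabs X))); intros n Hn.
  apply le_INR in Hn; rewrite INR_IZR_INZ, Z2Nat.id in Hn by exact Hz.
  pose proof (Rle_abs X); lra.
Qed.

Section Phi.

Variables a C : R.
Hypothesis Ha : 1 <= a.
Hypothesis HC : 0 <= C.

Definition phi (x : R) : R := x * (exp (a * x) + C).
Definition dphi (x : R) : R := exp (a * x) * (1 + a * x) + C.

Definition K_dphi : R := 2 + C + 2 * a + 18 * a * C.
Definition K_step : R := 24 * (a + C).
(* Twice the sum of the bounds on the five terms of [second_difference_decomposition]. *)
Definition K_curv : R := 2 * (2 * a * (1 + 18 * C) + 6 * a * K_dphi + K_dphi + 8 * a + 18).

Lemma K_dphi_nonneg : 0 <= K_dphi.
Proof. unfold K_dphi; assert (0 <= a * C) by nra; lra. Qed.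

Lemma K_curv_nonneg : 0 <= K_curv.
Proof. pose proof K_dphi_nonneg; unfold K_curv; assert (0 <= a * C) by nra; nra. Qed.

Lemma dphi_eq (x : R) : dphi x = a * phi x + exp (a * x) + C - a * C * x.
Proof. unfold dphi, phi; ring. Qed.

Lemma le_phi (z : R) : 0 <= z -> z <= phi z.
Proof.
  unfold phi; intro Hz.
  pose proof (exp_ineq1_le (a * z)).
  assert (1 <= exp (a * z) + C) by nra.
  nra.
Qed.

Lemma phi_lt_reg (x y : R) : 0 < x -> 0 < y -> phi x < phi y -> x < y.
Proof.
  unfold phi; intros Hx Hy H.
  destruct (Rlt_or_le x y) as [Hxy | Hyx]; [exact Hxy |].
  assert (exp (a*y) <= exp (a*x)).
  { destruct (Req_dec x y) as [-> | Hne]; [lra |].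
    left; apply exp_increasing; nra. }
  pose proof (exp_pos (a*y)); nra.
Qed.

Lemma phi_secant_bounds (x y : R) : 0 <= x -> x < y ->
  (y - x) * dphi x <= phi y - phi x <= (y - x) * dphi y.
Proof.
  unfold phi, dphi; intros Hx Hxy.
  assert (Hh : 0 < y - x) by lra.
  remember (y - x) as h eqn:Eh; replace y with (x + h) by lra; clear Eh Hxy.
  assert (Ey : exp (a*(x+h)) = exp (a*x) * exp (a*h))
    by (rewrite <- exp_plus; f_equal; ring).
  assert (Ex : exp (a*x) = exp (a*(x+h)) * exp (-(a*h)))
    by (rewrite <- exp_plus; f_equal; ring).
  pose proof (exp_ineq1_le (a*h)); pose proof (exp_ineq1_le (-(a*h))).
  pose proof (exp_pos (a*x)); pose proof (exp_pos (a*(x+h))).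
  assert (0 <= a*h) by nra.
  split.
  - rewrite Ey.
    assert (exp (a*x) * exp (a*h) >= exp (a*x) * (1 + a*h)) by nra.
    assert (0 <= h * (exp (a*x) * (a*h))) by (apply Rmult_le_pos; nra).
    nra.
  - rewrite Ex.
    assert (exp (a*(x+h)) * exp (-(a*h)) >= exp (a*(x+h)) * (1 - a*h)) by nra.
    assert (0 <= h * (exp (a*(x+h)) * (a*h))) by (apply Rmult_le_pos; nra).
    nra.
Qed.

Lemma pow4_le_phi (z : R) : 0 < z -> z^4 <= 6 * phi z.
Proof.
  unfold phi; intro Hz.
  pose proof (exp_ge_taylor3 (a*z)).
  assert (z^3 <= (a*z)^3) by (apply pow_incr; nra).
  assert (0 <= (a*z)^2) by apply pow2_ge_0.
  assert (z^3/6 <= exp (a*z)) by nra.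
  assert (0 <= z * C) by nra.
  nra.
Qed.

Lemma ln_phi_le (z : R) : 0 < z -> ln (phi z) <= 2 * a * z + ln (1 + C).
Proof.
  unfold phi; intro Hz.
  pose proof (exp_ineq1_le (a*z)); pose proof (exp_pos (a*z)).
  assert (Hz_exp : z <= exp (a*z)) by nra.
  assert (Hbound : z * (exp (a*z) + C) <= exp (2*a*z) * (1 + C)).
  { replace (2*a*z) with (a*z + a*z) by ring; rewrite exp_plus.
    assert (1 <= exp (a*z)) by nra.
    assert (z * C <= exp (a*z) * exp (a*z) * C) by (apply Rmult_le_compat_r; nra).
    nra. }
  assert (0 < z * (exp (a*z) + C)) by (apply Rmult_lt_0_compat; lra).
  eapply Rle_trans; [apply ln_le; eassumption |].
  rewrite ln_mult, ln_exp by (try apply exp_pos; lra).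
  lra.
Qed.

(* Second-order Taylor expansion of [phi] at the middle point [t1]. *)
Lemma phi_second_difference (t0 t1 t2 : R) :
  t0 < t1 -> t1 < t2 ->
  phi t1 - phi t0 = 1 -> phi t2 - phi t1 = 1 ->
  a * (t1 - t0) <= 1 -> a * (t2 - t1) <= 1 ->
  exists R1 R2,
    Rabs R1 <= (a * (t1 - t0))^3 + (a * (t2 - t1))^3 /\
    Rabs R2 <= 3 * a * ((t1 - t0)^2 + (t2 - t1)^2) /\
    ((t2 - t1) - (t1 - t0)) * dphi t1 =
      - (exp (a*t1) * t1 * ((a*(t1-t0))^2 + (a*(t2-t1))^2) / 2
         + exp (a*t1) * t1 * R1 + exp (a*t1) * R2).
Proof.
  unfold phi, dphi; intros H01 H12 F1 F2 Hu Hv.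
  set (d := t1 - t0) in *; set (e := t2 - t1) in *.
  set (u := a*d) in *; set (v := a*e) in *.
  set (E := exp (a*t1)) in *.
  assert (E0 : exp (a*t0) = E * exp (-u))
    by (unfold E, u, d; rewrite <- exp_plus; f_equal; ring).
  assert (E2 : exp (a*t2) = E * exp v)
    by (unfold E, v, e; rewrite <- exp_plus; f_equal; ring).
  assert (0 < d) by (unfold d; lra); assert (0 < e) by (unfold e; lra).
  assert (0 < u) by (unfold u; nra); assert (0 < v) by (unfold v; nra).
  exists ((exp v - 1 - v - v^2/2) + (exp (-u) - 1 + u - u^2/2)).
  exists (e * (exp v - 1) + d * (1 - exp (-u))).
  pose proof (exp_ge_taylor3 (-u)); pose proof (exp_le_taylor3 v ltac:(lra)).
  destruct (exp_taylor2_bounds v) as [Hv2 _]; specialize (Hv2 ltac:(lra)).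
  destruct (exp_taylor2_bounds (-u)) as [_ Hu2]; specialize (Hu2 ltac:(lra)).
  pose proof (exp_ineq1_le (-u)).
  assert (0 <= u^3) by (apply pow_le; lra); assert (0 <= v^3) by (apply pow_le; lra).
  assert (0 <= u^2) by (apply pow_le; lra); assert (v^3 <= v^2) by (simpl; nra).
  split; [| split].
  - apply Rabs_le; split; nra.
  - assert (0 <= exp v - 1 <= 3*v) by (assert (v^2 <= v) by (simpl; nra); lra).
    assert (0 <= 1 - exp (-u) <= u).
    { assert (exp (-u) <= 1) by (rewrite <- exp_0; left; apply exp_increasing; lra). lra. }
    assert (0 <= e * (exp v - 1) <= e * (3*v))
      by (split; [apply Rmult_le_pos | apply Rmult_le_compat_l]; lra).
    assert (0 <= d * (1 - exp (-u)) <= d * u)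
      by (split; [apply Rmult_le_pos | apply Rmult_le_compat_l]; lra).
    apply Rabs_le; unfold u, v in *; split; nra.
  - rewrite E0 in F1; rewrite E2 in F2.
    replace t2 with (t1 + e) in F2 by (unfold e; ring).
    replace t0 with (t1 - d) in F1 by (unfold d; ring).
    unfold u, v in *; nra.
Qed.

Lemma level_pow4_le (n t i : R) :
  1 <= n -> 0 < t -> phi t = n + i -> i <= 2 -> t^4 <= 18 * n.
Proof. intros Hn Ht Hphi Hi; pose proof (pow4_le_phi t Ht); lra. Qed.

Lemma dphi_ge (n t : R) : 0 <= t -> C * t <= n / 4 -> n <= phi t -> 3 * a * n / 4 <= dphi t.
Proof.
  intros Ht HCt Hphi; rewrite dphi_eq.
  pose proof (exp_pos (a * t)); nra.
Qed.

Lemma dphi_near (n t i y : R) :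
  2 <= n -> 0 <= i <= 2 -> 1 <= n * y -> 0 < t -> 1 <= t * y -> t <= 18 * n * y ->
  phi t = n + i -> Rabs (dphi t - a * n) <= K_dphi * n * y.
Proof.
  intros Hn Hi Hny Ht Hty Ht18 Hphi.
  rewrite dphi_eq, Hphi; unfold K_dphi.
  assert (HE : exp (a * t) <= 2 * n * y).
  { unfold phi in Hphi; pose proof (exp_pos (a * t)); nra. }
  assert (0 <= a * C * t <= 18 * a * C * n * y).
  { split; [apply Rmult_le_pos; nra |].
    assert (0 <= a * C) by nra; nra. }
  pose proof (exp_pos (a * t)).
  apply Rabs_le; split; nra.
Qed.

Lemma scaled_step_of_sandwich (n d P P' K y : R) :
  0 < n -> 0 < d -> d * P <= 1 -> 1 <= d * P' ->
  3 * a * n / 4 <= P -> 3 * a * n / 4 <= P' ->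
  Rabs (P - a * n) <= K * n * y -> Rabs (P' - a * n) <= K * n * y ->
  Rabs (a * n * d - 1) <= 2 * K * y /\ a * n * d <= 4 / 3.
Proof.
  intros Hn Hd Hup Hlow HP HP' Hnear Hnear'.
  apply Rabs_le_between in Hnear; apply Rabs_le_between in Hnear'.
  assert (0 < a * n) by nra.
  split.
  - rewrite <- (Rplus_0_r (a * n * d - 1)).
    apply (sandwich_abs_le _ _ _ P P' (3 * a * n / 4)); nra.
  - assert (a * n * d * P <= a * n) by nra.
    nra.
Qed.

Lemma first_step_upper (n t0 : R) :
  1 <= t0 -> t0^3 <= 18 * n -> phi t0 = n ->
  a * n - dphi t0 + / t0 / a * dphi t0 <= K_step * (/ t0)^2 * (3 * a * n / 4).
Proof.
  intros Ht0 Hcube Hphi0.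
  set (y := / t0).
  assert (Hyt : y * t0 = 1) by (unfold y; field; lra).
  assert (0 < y) by (unfold y; apply Rinv_0_lt_compat; lra).
  assert (Hsmall : t0 <= 18 * n * y^2).
  { replace t0 with (t0^3 * y^2)
      by (replace (t0^3 * y^2) with (t0 * (y * t0)^2) by ring; rewrite Hyt; ring).
    apply Rmult_le_compat_r; [apply pow2_ge_0 | lra]. }
  assert (Hlevel : exp (a * t0) + C = n * y).
  { transitivity ((exp (a * t0) + C) * (y * t0)); [rewrite Hyt; ring |].
    rewrite <- Hphi0; unfold phi; ring. }
  assert (Hsum : a * n - dphi t0 + y / a * dphi t0 = a * C * t0 + n * y^2 / a - C).
  { rewrite dphi_eq, Hphi0.
    replace (exp (a * t0)) with (n * y - C) by lra.
    transitivity (a * C * t0 + n * y^2 / a - C * (y * t0)); [field; lra | rewrite Hyt; ring]. }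
  rewrite Hsum; unfold K_step.
  assert (n * y^2 / a <= n * y^2).
  { unfold Rdiv; rewrite <- (Rmult_1_r (n * y^2)) at 2.
    apply Rmult_le_compat_l; [nra | rewrite <- Rinv_1; apply Rinv_le_contravar; lra]. }
  assert (a * C * t0 <= 18 * a * C * n * y^2) by (assert (0 <= a * C) by nra; nra).
  replace (24 * (a + C) * y^2 * (3 * a * n / 4)) with (18 * a * (a + C) * (n * y^2)) by field.
  assert ((18 * a * C + 1) * (n * y^2) <= 18 * a * (a + C) * (n * y^2))
    by (apply Rmult_le_compat_r; nra).
  lra.
Qed.

Lemma first_step_lower (n t0 t1 : R) :
  1 <= t0 -> t0 <= t1 -> t0^4 <= 18 * n -> phi t1 = n + 1 ->
  - (K_step * (/ t0)^2 * (3 * a * n / 4)) <= a * n - dphi t1 + / t0 / a * dphi t1.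
Proof.
  intros Ht0 Ht01 Ht4 Hphi1.
  set (y := / t0).
  assert (Hyt : y * t0 = 1) by (unfold y; field; lra).
  assert (0 < y <= 1) by (split; [unfold y; apply Rinv_0_lt_compat | nra]; lra).
  assert (Hone : 1 <= 18 * n * y^2).
  { assert (t0^2 <= t0^4) by (apply Rle_pow; lia || lra).
    assert (t0^2 * y^2 = 1) by (rewrite <- Rpow_mult_distr, Rmult_comm, Hyt; ring).
    nra. }
  pose proof (exp_pos (a * t1)).
  assert (HE1 : exp (a * t1) <= (n + 1) * y).
  { assert (exp (a * t1) * t1 <= n + 1) by (unfold phi in Hphi1; nra).
    assert (1 <= t1 * y) by nra.
    nra. }
  assert (HP1 : dphi t1 <= a * (n + 1) + exp (a * t1) + C)
    by (rewrite dphi_eq, Hphi1; assert (0 <= a * C * t1) by (apply Rmult_le_pos; nra); lra).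
  assert (0 < / a <= 1)
    by (split; [apply Rinv_0_lt_compat | rewrite <- Rinv_1; apply Rinv_le_contravar]; lra).
  assert (Hya : y / a <= 1) by (unfold Rdiv; nra).
  assert (Hlow : a * n - dphi t1 + y / a * dphi t1 >= - a - C).
  { replace (a * n - dphi t1 + y / a * dphi t1) with (a * n - (1 - y / a) * dphi t1) by ring.
    assert (Hmul : (1 - y / a) * dphi t1 <= (1 - y / a) * (a * (n + 1) + exp (a * t1) + C))
      by (apply Rmult_le_compat_l; lra).
    assert (y / a * (exp (a * t1) + C) >= 0)
      by (unfold Rdiv; apply Rle_ge, Rmult_le_pos; nra).
    replace ((1 - y / a) * (a * (n + 1) + exp (a * t1) + C))
      with (a * (n + 1) + exp (a * t1) + C - y * (n + 1) - y / a * (exp (a * t1) + C))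
      in Hmul by (field; lra).
    lra. }
  unfold K_step.
  replace (24 * (a + C) * y^2 * (3 * a * n / 4)) with (18 * a * (a + C) * (n * y^2)) by field.
  assert (a + C <= (a + C) * (18 * n * y^2))
    by (rewrite <- (Rmult_1_r (a + C)) at 1; apply Rmult_le_compat_l; lra).
  assert ((a + C) * (18 * n * y^2) * 1 <= (a + C) * (18 * n * y^2) * a)
    by (apply Rmult_le_compat_l; nra).
  lra.
Qed.

Lemma second_difference_decomposition (n d e P G E R1 R2 : R) :
  (e - d) * P = - (G * ((a * d)^2 + (a * e)^2) / 2 + G * R1 + E * R2) ->
  (a * n^2 * (d - e) - 1) * P =
    a * (G - n) * (((a * n * d)^2 + (a * n * e)^2) / 2)
    + a * n * (((a * n * d)^2 + (a * n * e)^2) / 2 - 1)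
    + (a * n - P) + a * n^2 * G * R1 + a * n^2 * E * R2.
Proof.
  intro Hid.
  replace ((a * n^2 * (d - e) - 1) * P) with (- (a * n^2) * ((e - d) * P) - P) by ring.
  rewrite Hid; field.
Qed.

Lemma cubic_remainder_le (n y d e G R1 : R) :
  0 < n -> 1 <= n * y -> 0 < G <= 3 * n / 2 ->
  0 < a * n * d <= 4 / 3 -> 0 < a * n * e <= 4 / 3 ->
  Rabs R1 <= (a * d)^3 + (a * e)^3 ->
  Rabs (a * n^2 * G * R1) <= 8 * a * n * y.
Proof.
  intros Hn Hny HG HD HE HR1.
  assert (Hcubes : n^3 * Rabs R1 <= 5).
  { assert (n^3 * ((a * d)^3 + (a * e)^3) = (a * n * d)^3 + (a * n * e)^3) by ring.
    assert ((a * n * d)^3 <= (4 / 3)^3) by (apply pow_incr; lra).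
    assert ((a * n * e)^3 <= (4 / 3)^3) by (apply pow_incr; lra).
    assert (n^3 * Rabs R1 <= n^3 * ((a * d)^3 + (a * e)^3))
      by (apply Rmult_le_compat_l; [apply pow_le |]; lra).
    lra. }
  assert (0 <= a * n^2) by (apply Rmult_le_pos; [lra | apply pow2_ge_0]).
  rewrite Rabs_mult, (Rabs_right (a * n^2 * G)) by (apply Rle_ge, Rmult_le_pos; lra).
  pose proof (Rabs_pos R1).
  assert (a * n^2 * G * Rabs R1 <= a * (3 / 2) * (n^3 * Rabs R1)).
  { replace (a * (3 / 2) * (n^3 * Rabs R1)) with (a * n^2 * Rabs R1 * (3 * n / 2)) by field.
    replace (a * n^2 * G * Rabs R1) with (a * n^2 * Rabs R1 * G) by ring.
    apply Rmult_le_compat_l; [apply Rmult_le_pos |]; lra. }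
  nra.
Qed.

Lemma square_remainder_le (n y d e E R2 : R) :
  0 < E <= 3 * n * y / 2 ->
  0 < a * n * d <= 4 / 3 -> 0 < a * n * e <= 4 / 3 ->
  Rabs R2 <= 3 * a * (d^2 + e^2) ->
  Rabs (a * n^2 * E * R2) <= 18 * n * y.
Proof.
  intros HE HD HEe HR2.
  assert (0 <= a * n^2) by (apply Rmult_le_pos; [lra | apply pow2_ge_0]).
  assert (Hsq : a * n^2 * Rabs R2 <= 12).
  { assert (a * n^2 * (3 * a * (d^2 + e^2)) = 3 * ((a * n * d)^2 + (a * n * e)^2)) by ring.
    assert ((a * n * d)^2 <= (4 / 3)^2) by (apply pow_incr; lra).
    assert ((a * n * e)^2 <= (4 / 3)^2) by (apply pow_incr; lra).
    assert (a * n^2 * Rabs R2 <= a * n^2 * (3 * a * (d^2 + e^2)))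
      by (apply Rmult_le_compat_l; lra).
    lra. }
  replace (a * n^2 * E * R2) with (a * n^2 * R2 * E) by ring.
  rewrite Rabs_mult, (Rabs_right E), Rabs_mult, (Rabs_right (a * n^2)) by lra.
  assert (a * n^2 * Rabs R2 * E <= 12 * E) by (apply Rmult_le_compat_r; lra).
  lra.
Qed.

Lemma scaled_product_le (n d e : R) :
  0 < a * n * d <= 4 / 3 -> 0 < a * n * e <= 4 / 3 -> 0 <= n^2 * (d * e) <= 2.
Proof.
  intros HD HE.
  replace (n^2 * (d * e)) with ((a * n * d) * (a * n * e) * / (a * a)) by (field; lra).
  assert (0 < / (a * a) <= 1)
    by (split; [apply Rinv_0_lt_compat | rewrite <- Rinv_1; apply Rinv_le_contravar]; nra).
  assert (a * n * d * (a * n * e) <= 4 / 3 * (4 / 3)) by (apply Rmult_le_compat; lra).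
  assert (a * n * d * (a * n * e) * / (a * a) <= 4 / 3 * (4 / 3) * 1)
    by (apply Rmult_le_compat; try lra; apply Rmult_le_pos; lra).
  split; [apply Rmult_le_pos; [apply Rmult_le_pos |] |]; lra.
Qed.

Section Three_levels.

Variables n t0 t1 t2 : R.
Hypothesis Hn : 2 <= n.
Hypothesis Ht0 : 1 <= t0.
Hypotheses (Ht1 : 0 < t1) (Ht2 : 0 < t2).
Hypotheses (Hphi0 : phi t0 = n) (Hphi1 : phi t1 = n + 1) (Hphi2 : phi t2 = n + 2).
Hypotheses (HCt0 : C * t0 <= n / 4) (HCt1 : C * t1 <= n / 4) (HCt2 : C * t2 <= n / 4).

Lemma levels_increasing : t0 < t1 /\ t1 < t2.
Proof. split; apply phi_lt_reg; lra. Qed.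

Lemma level0_scale : 0 < / t0 <= 1 /\ 1 <= n * / t0 /\ 1 <= 18 * n * (/ t0)^2.
Proof.
  pose proof (le_phi t0 ltac:(lra)).
  assert (Hinv : t0 * / t0 = 1) by (field; lra).
  assert (0 < / t0) by (apply Rinv_0_lt_compat; lra).
  assert (Ht4 : t0^4 <= 18 * n) by (apply (level_pow4_le n t0 0); lra).
  assert (t0^2 <= t0^4) by (apply Rle_pow; lia || lra).
  assert (t0^2 * (/ t0)^2 = 1) by (rewrite <- Rpow_mult_distr, Hinv; ring).
  split; [split |]; nra.
Qed.

Lemma dphi_level_bounds (t i : R) :
  t0 <= t -> phi t = n + i -> 0 <= i <= 2 -> C * t <= n / 4 ->
  3 * a * n / 4 <= dphi t /\ Rabs (dphi t - a * n) <= K_dphi * n * / t0.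
Proof.
  intros Ht Hphi Hi HCt.
  assert (Ht4 : t^4 <= 18 * n) by (apply (level_pow4_le n t i); lra).
  destruct (pow4_le_scale n t0 t Ht0 Ht Ht4).
  destruct level0_scale as [_ [Hny _]].
  split; [apply (dphi_ge n t) | apply (dphi_near n t i)]; lra.
Qed.

Lemma steps_scaled :
  (Rabs (a * n * (t1 - t0) - 1) <= 2 * K_dphi * / t0 /\ a * n * (t1 - t0) <= 4 / 3) /\
  (Rabs (a * n * (t2 - t1) - 1) <= 2 * K_dphi * / t0 /\ a * n * (t2 - t1) <= 4 / 3).
Proof.
  destruct levels_increasing as [H01 H12].
  destruct (dphi_level_bounds t0 0) as [P0l P0n]; try lra.
  destruct (dphi_level_bounds t1 1) as [P1l P1n]; try lra.
  destruct (dphi_level_bounds t2 2) as [P2l P2n]; try lra.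
  destruct (phi_secant_bounds t0 t1) as [S0 S1]; try lra.
  destruct (phi_secant_bounds t1 t2) as [S1' S2]; try lra.
  split; [apply (scaled_step_of_sandwich n _ (dphi t0) (dphi t1))
         | apply (scaled_step_of_sandwich n _ (dphi t1) (dphi t2))]; lra.
Qed.

Lemma first_step_scaled :
  Rabs (a * n * (t1 - t0) - 1 + / t0 / a) <= K_step * (/ t0)^2.
Proof.
  destruct levels_increasing as [H01 _].
  destruct (dphi_level_bounds t0 0) as [P0l _]; try lra.
  destruct (dphi_level_bounds t1 1) as [P1l _]; try lra.
  destruct (phi_secant_bounds t0 t1) as [S0 S1]; try lra.
  assert (Ht4 : t0^4 <= 18 * n) by (apply (level_pow4_le n t0 0); lra).
  assert (t0^3 <= t0^4) by (apply Rle_pow; lia || lra).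
  apply (sandwich_abs_le _ _ _ (dphi t0) (dphi t1) (3 * a * n / 4)); try nra.
  - apply first_step_upper; lra.
  - apply (first_step_lower n t0 t1); lra.
Qed.

Lemma level1_bounds :
  0 < exp (a * t1) <= 3 * n * / t0 / 2 /\ 0 < exp (a * t1) * t1 <= 3 * n / 2 /\
  Rabs (exp (a * t1) * t1 - n) <= (1 + 18 * C) * n * / t0.
Proof.
  destruct levels_increasing as [H01 _].
  destruct level0_scale as [Hy [Hny _]].
  assert (Ht4 : t1^4 <= 18 * n) by (apply (level_pow4_le n t1 1); lra).
  destruct (pow4_le_scale n t0 t1 Ht0 ltac:(lra) Ht4) as [Ht1n Ht1y].
  assert (HG : exp (a * t1) * t1 = n + 1 - C * t1) by (unfold phi in Hphi1; lra).
  assert (0 <= C * t1 <= C * (18 * n * / t0))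
    by (split; [apply Rmult_le_pos | apply Rmult_le_compat_l]; lra).
  pose proof (exp_pos (a * t1)).
  assert (exp (a * t1) * 1 <= exp (a * t1) * (t1 * / t0)) by (apply Rmult_le_compat_l; lra).
  assert (exp (a * t1) * t1 * / t0 <= (n + 1) * / t0) by (apply Rmult_le_compat_r; lra).
  repeat split; try nra.
  rewrite HG; apply Rabs_le; split; lra.
Qed.

Lemma second_difference_times_dphi :
  Rabs ((a * n^2 * ((t1 - t0) - (t2 - t1)) - 1) * dphi t1) <= K_curv * (n * / t0) / 2.
Proof.
  destruct levels_increasing as [H01 H12].
  destruct steps_scaled as [[Dd Dd'] [De De']].
  destruct (dphi_level_bounds t1 1) as [_ P1n]; try lra.
  destruct level0_scale as [Hy [Hny _]].
  destruct level1_bounds as [HE [HG HGn]].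
  destruct (phi_second_difference t0 t1 t2) as [R1 [R2 [HR1 [HR2 Hid]]]]; try nra.
  set (y := / t0) in *; set (d := t1 - t0) in *; set (e := t2 - t1) in *.
  set (E := exp (a * t1)) in *; set (G := E * t1) in *.
  assert (0 < a * n * d) by (apply Rmult_lt_0_compat; [nra | unfold d; lra]).
  assert (0 < a * n * e) by (apply Rmult_lt_0_compat; [nra | unfold e; lra]).
  pose proof K_dphi_nonneg.
  destruct (mean_sq_near1 (a * n * d) (a * n * e) (2 * K_dphi * y)) as [HS HS1]; try lra.
  rewrite (second_difference_decomposition n d e (dphi t1) G E R1 R2 Hid).
  replace (K_curv * (n * y) / 2) with
    (2 * a * (1 + 18 * C) * n * y + 6 * a * K_dphi * n * y + K_dphi * n * y
     + 8 * a * n * y + 18 * n * y) by (unfold K_curv; field).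
  apply Rabs_sum5_le.
  - rewrite !Rabs_mult, (Rabs_right a), (Rabs_right (_ / 2)) by lra.
    replace (2 * a * (1 + 18 * C) * n * y) with (a * ((1 + 18 * C) * n * y) * 2) by ring.
    pose proof (Rabs_pos (G - n)).
    apply Rmult_le_compat; [apply Rmult_le_pos | | apply Rmult_le_compat_l |]; lra.
  - rewrite Rabs_mult, (Rabs_right (a * n)) by nra.
    replace (6 * a * K_dphi * n * y) with (a * n * (3 * (2 * K_dphi * y))) by ring.
    apply Rmult_le_compat_l; nra.
  - rewrite Rabs_minus_sym; exact P1n.
  - apply (cubic_remainder_le n y d e); lra.
  - apply (square_remainder_le n y d e); lra.
Qed.

Lemma second_difference_scaled :
  Rabs (a * n^2 * ((t1 - t0) - (t2 - t1)) - 1) <= K_curv * / t0.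
Proof.
  destruct levels_increasing as [H01 _].
  destruct (dphi_level_bounds t1 1) as [P1l _]; try lra.
  pose proof K_curv_nonneg.
  destruct level0_scale as [Hy _].
  apply (Rabs_le_of_mul_lower _ (dphi t1) (3 * a * n / 4)); [nra | lra |].
  eapply Rle_trans; [apply second_difference_times_dphi |].
  replace (K_curv * (n * / t0) / 2) with (K_curv * / t0 * (n / 2)) by (field; lra).
  apply Rmult_le_compat_l; [apply Rmult_le_pos |]; nra.
Qed.

Lemma first_step_estimate :
  Rabs (t1 - t0 - (1 / (a * n) - 1 / (a^2 * n * t0))) <= K_step * ((/ t0)^2 / n).
Proof.
  replace (t1 - t0 - (1 / (a * n) - 1 / (a^2 * n * t0)))
    with ((a * n * (t1 - t0) - 1 + / t0 / a) / (a * n)) by (field; lra).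
  replace (K_step * ((/ t0)^2 / n)) with (K_step * (/ t0)^2 / n) by (field; lra).
  apply Rabs_div_le; [apply first_step_scaled | lra | lra].
Qed.

Lemma second_difference_estimate :
  Rabs (2 * t1 - t0 - t2 - 1 / (a * n^2)) <= K_curv * (/ t0 / n^2).
Proof.
  replace (2 * t1 - t0 - t2 - 1 / (a * n^2))
    with ((a * n^2 * ((t1 - t0) - (t2 - t1)) - 1) / (a * n^2)) by (field; lra).
  replace (K_curv * (/ t0 / n^2)) with (K_curv * / t0 / n^2) by (field; lra).
  apply Rabs_div_le; [apply second_difference_scaled | lra | nra].
Qed.

Lemma second_step_estimate :
  Rabs (t2 - t1 - (1 / (a * n) - 1 / (a^2 * n * t0)))
    <= (K_step + 18 + K_curv) * ((/ t0)^2 / n).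
Proof.
  pose proof first_step_estimate; pose proof second_difference_estimate.
  destruct level0_scale as [Hy [Hny Hny2]].
  pose proof K_curv_nonneg.
  assert (Hw1 : / t0 / n^2 <= (/ t0)^2 / n).
  { apply (Rmult_le_reg_r (n^2)); [nra |].
    replace (/ t0 / n^2 * n^2) with (/ t0 * 1) by (field; lra).
    replace ((/ t0)^2 / n * n^2) with (/ t0 * (n * / t0)) by (field; lra).
    apply Rmult_le_compat_l; lra. }
  assert (Hw2 : 1 / (a * n^2) <= 18 * ((/ t0)^2 / n)).
  { apply (Rmult_le_reg_r (n^2)); [nra |].
    replace (1 / (a * n^2) * n^2) with (/ a) by (field; lra).
    replace (18 * ((/ t0)^2 / n) * n^2) with (18 * n * (/ t0)^2) by (field; lra).
    assert (/ a <= 1) by (rewrite <- Rinv_1; apply Rinv_le_contravar; lra).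
    lra. }
  assert (0 < 1 / (a * n^2)) by (apply Rdiv_lt_0_compat; nra).
  assert (K_curv * (/ t0 / n^2) <= K_curv * ((/ t0)^2 / n)) by (apply Rmult_le_compat_l; lra).
  replace (t2 - t1 - (1 / (a * n) - 1 / (a^2 * n * t0)))
    with ((t1 - t0 - (1 / (a * n) - 1 / (a^2 * n * t0)))
          - (2 * t1 - t0 - t2 - 1 / (a * n^2)) - 1 / (a * n^2)) by ring.
  eapply Rle_trans; [apply Rabs_triang |].
  rewrite Rabs_Ropp, (Rabs_right (1 / (a * n^2))) by lra.
  eapply Rle_trans; [apply Rplus_le_compat_r, Rabs_triang |].
  rewrite Rabs_Ropp; lra.
Qed.

Lemma scaled_difference_le : Rabs (n^2 * ((t1 - t0) - (t2 - t1))) <= 1 + K_curv.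
Proof.
  pose proof second_difference_scaled.
  destruct level0_scale as [Hy _].
  pose proof K_curv_nonneg.
  replace (n^2 * ((t1 - t0) - (t2 - t1)))
    with ((1 + (a * n^2 * ((t1 - t0) - (t2 - t1)) - 1)) / (a * 1)) by (field; lra).
  apply Rle_trans with ((1 + K_curv) / 1); [apply Rabs_div_le; [| lra | lra] | lra].
  eapply Rle_trans; [apply Rabs_triang |]; rewrite Rabs_R1.
  assert (K_curv * / t0 <= K_curv * 1) by (apply Rmult_le_compat_l; lra).
  lra.
Qed.

Lemma inverse_second_difference_estimate :
  Rabs (1 / t0 + 1 / t2 - 2 / t1) <= (5 + K_curv) * ((/ t0)^2 / n^2).
Proof.
  destruct levels_increasing as [H01 H12].
  destruct steps_scaled as [[_ Dd'] [_ De']].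
  destruct level0_scale as [Hy _].
  pose proof scaled_difference_le as Hdiff.
  assert (0 < a * n * (t1 - t0)) by (apply Rmult_lt_0_compat; nra).
  assert (0 < a * n * (t2 - t1)) by (apply Rmult_lt_0_compat; nra).
  destruct (scaled_product_le n (t1 - t0) (t2 - t1)) as [Hprod Hprod']; [lra | lra |].
  set (y := / t0) in *; set (d := t1 - t0) in *; set (e := t2 - t1) in *.
  assert (0 < / t1 <= 1)
    by (split; [apply Rinv_0_lt_compat | rewrite <- Rinv_1; apply Rinv_le_contravar]; lra).
  assert (0 < / t2 <= y)
    by (split; [apply Rinv_0_lt_compat | unfold y; apply Rinv_le_contravar]; lra).
  replace (1 / t0 + 1 / t2 - 2 / t1)
    with ((n^2 * (d - e) + 2 * (n^2 * (d * e)) * / t1) * (y * / t2) / (1 * n^2))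
    by (unfold y, d, e; field; repeat split; lra).
  replace ((5 + K_curv) * (y^2 / n^2)) with ((5 + K_curv) * y^2 / n^2) by (field; lra).
  apply Rabs_div_le; [| lra | nra].
  rewrite Rabs_mult, (Rabs_right (y * / t2)) by nra.
  assert (Rabs (n^2 * (d - e) + 2 * (n^2 * (d * e)) * / t1) <= 5 + K_curv).
  { eapply Rle_trans; [apply Rabs_triang |].
    rewrite (Rabs_right (2 * (n^2 * (d * e)) * / t1)) by (apply Rle_ge, Rmult_le_pos; lra).
    assert (2 * (n^2 * (d * e)) * / t1 <= 2 * 2 * 1) by (apply Rmult_le_compat; lra).
    lra. }
  apply Rmult_le_compat; [apply Rabs_pos | nra | lra | simpl; nra].
Qed.

End Three_levels.

End Phi.

Lemma level_inv_le_log (a C t N : R) : 1 <= a -> 0 <= C -> 0 < t -> phi a C t = N ->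
  4 * a + 2 * ln (1 + C) <= ln N -> 1 <= t /\ / t <= 4 * a / ln N.
Proof.
  intros Ha HC Ht Hphi Hlog.
  pose proof (ln_phi_le a C Ha HC t Ht) as Hln; rewrite Hphi in Hln.
  assert (0 <= ln (1 + C)) by (rewrite <- ln_1; apply ln_le; lra).
  assert (Hlt : ln N <= 4 * a * t) by lra.
  split; [nra |].
  apply (Rmult_le_reg_r (t * ln N)); [nra |].
  replace (/ t * (t * ln N)) with (ln N) by (field; lra).
  replace (4 * a / ln N * (t * ln N)) with (4 * a * t) by (field; lra).
  exact Hlt.
Qed.

Lemma levels_eventually_regular (a C : R) (t : nat -> nat -> R) :
  1 <= a -> 0 <= C ->
  (forall n i : nat, (1 <= n)%nat -> (i <= 2)%nat ->
     0 < t n i /\ phi a C (t n i) = INR (n + i)) ->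
  exists N : nat, forall n : nat, (N <= n)%nat ->
    2 <= INR n /\ 0 < ln (INR n) /\ 1 <= t n 0%nat /\ / t n 0%nat <= 4 * a / ln (INR n) /\
    C * t n 0%nat <= INR n / 4 /\ C * t n 1%nat <= INR n / 4 /\ C * t n 2%nat <= INR n / 4.
Proof.
  intros Ha HC Hlev.
  set (Y := exp (4 * a + 2 * ln (1 + C))).
  destruct (INR_eventually_gt (2 + Y + 4608 * C^4)) as [N HN].
  exists N; intros n Hn; specialize (HN n Hn).
  assert (0 < Y) by apply exp_pos.
  assert (0 <= 4608 * C^4) by (assert (0 <= C^4) by (apply pow_le; lra); lra).
  assert (Hn1 : (1 <= n)%nat) by (apply INR_le; simpl; lra).
  assert (Hlog : 4 * a + 2 * ln (1 + C) <= ln (INR n))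
    by (rewrite <- (ln_exp (4 * a + 2 * ln (1 + C))); apply ln_le; fold Y; lra).
  assert (0 <= ln (1 + C)) by (rewrite <- ln_1; apply ln_le; lra).
  assert (Hsmall : forall i : nat, (i <= 2)%nat -> C * t n i <= INR n / 4).
  { intros i Hi; destruct (Hlev n i Hn1 Hi) as [Hpos Hphi].
    apply mul_le_quarter; try lra.
    apply (level_pow4_le a C Ha HC (INR n) _ (INR i)); try lra.
    - rewrite Hphi, plus_INR; reflexivity.
    - apply (le_INR i 2) in Hi; simpl in Hi; lra. }
  destruct (Hlev n 0%nat Hn1 ltac:(lia)) as [Ht0 Hphi0].
  rewrite Nat.add_0_r in Hphi0.
  destruct (level_inv_le_log a C (t n 0%nat) (INR n) Ha HC Ht0 Hphi0 Hlog).
  repeat split; try lra; apply Hsmall; lia.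
Qed.

Lemma log_rescale (a K y L w : R) (k : nat) :
  0 <= K -> 0 <= y <= 4 * a / L -> 0 < L -> 0 < w ->
  K * (y^k / w) <= (4 * a)^k * K * Rabs (1 / (w * L^k)).
Proof.
  intros HK Hy HL Hw.
  assert (0 < L^k) by (apply pow_lt; lra).
  rewrite Rabs_pos_eq by (apply Rlt_le, Rdiv_lt_0_compat, Rmult_lt_0_compat; lra).
  replace ((4 * a)^k * K * (1 / (w * L^k))) with (K * ((4 * a / L)^k / w))
    by (unfold Rdiv; rewrite Rpow_mult_distr, pow_inv; field; repeat split; lra).
  apply Rmult_le_compat_l; [exact HK |].
  unfold Rdiv; apply Rmult_le_compat_r; [left; apply Rinv_0_lt_compat; exact Hw |].
  apply pow_incr; exact Hy.
Qed.

Lemma eventual_estimates (a C : R) (t : nat -> nat -> R) :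
  1 <= a -> 0 <= C ->
  (forall n i : nat, (1 <= n)%nat -> (i <= 2)%nat ->
     0 < t n i /\ phi a C (t n i) = INR (n + i)) ->
  exists N : nat, forall n : nat, (N <= n)%nat ->
    Rabs (t n 1%nat - t n 0%nat - (1 / (a * INR n) - 1 / (a^2 * INR n * t n 0%nat)))
      <= (4 * a)^2 * K_step a C * Rabs (1 / (INR n * ln (INR n) ^ 2)) /\
    Rabs (t n 2%nat - t n 1%nat - (1 / (a * INR n) - 1 / (a^2 * INR n * t n 0%nat)))
      <= (4 * a)^2 * (K_step a C + 18 + K_curv a C) * Rabs (1 / (INR n * ln (INR n) ^ 2)) /\
    Rabs (2 * t n 1%nat - t n 0%nat - t n 2%nat - 1 / (a * INR n ^ 2))
      <= 4 * a * K_curv a C * Rabs (1 / (INR n ^ 2 * ln (INR n))) /\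
    Rabs (1 / t n 0%nat + 1 / t n 2%nat - 2 / t n 1%nat)
      <= (4 * a)^2 * (5 + K_curv a C) * Rabs (1 / (INR n ^ 2 * ln (INR n) ^ 2)).
Proof.
  intros Ha HC Hlev.
  destruct (levels_eventually_regular a C t Ha HC Hlev) as [N HN].
  exists N; intros n Hn.
  destruct (HN n Hn) as [Hn2 [HL [Ht0 [Hy [HCt0 [HCt1 HCt2]]]]]].
  assert (Hn1 : (1 <= n)%nat) by (apply INR_le; simpl; lra).
  destruct (Hlev n 0%nat Hn1 ltac:(lia)) as [_ Hphi0].
  destruct (Hlev n 1%nat Hn1 ltac:(lia)) as [Ht1 Hphi1].
  destruct (Hlev n 2%nat Hn1 ltac:(lia)) as [Ht2 Hphi2].
  rewrite plus_INR in Hphi0, Hphi1, Hphi2.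
  replace (INR 0) with 0 in Hphi0 by reflexivity; rewrite Rplus_0_r in Hphi0.
  replace (INR 1) with 1 in Hphi1 by reflexivity.
  replace (INR 2) with 2 in Hphi2 by (simpl; ring).
  assert (Hy' : 0 <= / t n 0%nat <= 4 * a / ln (INR n))
    by (split; [left; apply Rinv_0_lt_compat |]; lra).
  assert (0 < INR n ^ 2) by (apply pow_lt; lra).
  assert (0 <= K_step a C) by (unfold K_step; lra).
  pose proof (K_curv_nonneg a C Ha HC).
  repeat split; eapply Rle_trans.
  - apply (first_step_estimate a C Ha HC (INR n) _ _ (t n 2%nat)); assumption.
  - apply log_rescale; lra.
  - apply (second_step_estimate a C Ha HC (INR n)); assumption.
  - apply log_rescale; lra.
  - apply (second_difference_estimate a C Ha HC (INR n)); assumption.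
  - rewrite <- (pow_1 (/ t n 0%nat)), <- (pow_1 (4 * a)), <- (pow_1 (ln (INR n))).
    apply log_rescale; lra.
  - apply (inverse_second_difference_estimate a C Ha HC (INR n)); assumption.
  - apply log_rescale; lra.
Qed.

Theorem lemma5 (m c : nat) (t : nat -> nat -> R) :
  (0 < m)%nat ->
  (forall n i : nat, (1 <= n)%nat -> (i <= 2)%nat ->
     0 < t n i /\ fmc m c (t n i) = INR (n + i)) ->
  bigO (fun n => t n 1%nat - t n 0%nat
                 - (1 / (INR m * INR n) - 1 / (INR m ^ 2 * INR n * t n 0%nat)))
       (fun n => 1 / (INR n * (ln (INR n)) ^ 2)) /\
  bigO (fun n => t n 2%nat - t n 1%nat
                 - (1 / (INR m * INR n) - 1 / (INR m ^ 2 * INR n * t n 0%nat)))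
       (fun n => 1 / (INR n * (ln (INR n)) ^ 2)) /\
  bigO (fun n => 2 * t n 1%nat - t n 0%nat - t n 2%nat - 1 / (INR m * INR n ^ 2))
       (fun n => 1 / (INR n ^ 2 * ln (INR n))) /\
  bigO (fun n => 1 / t n 0%nat + 1 / t n 2%nat - 2 / t n 1%nat)
       (fun n => 1 / (INR n ^ 2 * (ln (INR n)) ^ 2)).
Proof.
  intros Hm Hlev.
  assert (Ha : 1 <= INR m) by (apply (le_INR 1); lia).
  destruct (eventual_estimates (INR m) (INR c) t Ha (pos_INR c) Hlev) as [N HN].
  split; [| split; [| split]]; eexists; exists N; intros n Hn; apply (HN n Hn).
Qed.
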